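(* For every $k\ge1$, the linear map induced by $T_k$ on the quotient space $V_k/\psi_k(V_1)$ (well defined since $\psi_k(V_1)$ is $T_k$-invariant) is nilpotent.
   Context: Let $\mathcal{A}$ be a finite alphabet of $r$ symbols and $T=(T_{x,y})_{x,y\in\mathcal{A}}$ an $r\times r$ matrix with entries in $\{0,1\}$. For $k\ge1$, an admissible $k$-word is a string $a_1\cdots a_k$ of symbols with $T_{a_{i+1},a_i}=1$ for $1\le i\le k-1$. $V_k$ is the complex vector space with basis $\{[w]\}$ indexed by admissible $k$-words. $\psi_k:V_1\to V_k$ is linear with $\psi_k([a])$ the sum of $[w]$ over all admissible $k$-words $w$ beginning with $a$. $T_k:V_k\to V_k$ is linear with $T_k([a_1\cdots a_k])=\sum[a_2\cdots a_kx]$, summed over all symbols $x$ such that $a_2\cdots a_kx$ is admissible. One has $T_k\circ\psi_k=\psi_k\circ T$, where $T([a])=\sum_{b:T_{b,a}=1}[b]$. *)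

From HB Require Import structures.
From mathcomp Require Import all_boot all_order all_algebra.
From mathcomp Require Import complex.
Set Implicit Arguments. Unset Strict Implicit. Unset Printing Implicit Defensive.
Import Order.TTheory GRing.Theory Num.Theory.
Local Open Scope ring_scope.

(* Alphabet: a finite type A; transition matrix T : A -> A -> bool with
   T x y = T_{x,y}.  Scalars: the complex numbers R[i] over a real closed
   field R (R = the reals gives C). *)

Definition admissible (A : finType) (T : A -> A -> bool) (s : seq A) : bool :=
  sorted (fun a b => T b a) s.

Definition Word (A : finType) (T : A -> A -> bool) (k : nat) :=
  {w : k.-tuple A | admissible T w}.

Definition V (R : rcfType) (A : finType) (T : A -> A -> bool) (k : nat) :=
  {ffun Word T k -> R[i]}.

Definition basisv (R : rcfType) (A : finType) (T : A -> A -> bool) (k : nat)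
  (w : Word T k) : V R T k := [ffun w' => (w' == w)%:R].

Definition psi (R : rcfType) (A : finType) (T : A -> A -> bool) (k : nat)
  (v : V R T 1) : V R T k :=
  \sum_(u : Word T 1) v u *:
     \sum_(w : Word T k | take 1 (tval (sval w)) == tval (sval u)) basisv R w.

Definition Tk (R : rcfType) (A : finType) (T : A -> A -> bool) (k : nat)
  (v : V R T k) : V R T k :=
  \sum_(w : Word T k) v w *:
     \sum_(w' : Word T k | [exists x : A,
              tval (sval w') == rcons (behead (tval (sval w))) x]) basisv R w'.

From mathcomp Require Import all_boot all_order all_algebra.
From mathcomp Require Import complex zify.
Set Implicit Arguments. Unset Strict Implicit. Unset Printing Implicit Defensive.
Import GRing.Theory.
Local Open Scope ring_scope.

(* View v in V_k as a function on admissible k-words.  The coefficient of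
   T_k v at a_1...a_k is the sum of v(c a_1...a_{k-1}) over the letters c
   allowed before a_1, and which letters are allowed depends on a_1 alone.
   Hence if v only depends on the first m+1 letters of a word (m >= 1), then
   T_k v only depends on the first m.  Every v depends on at most k letters,
   so T_k^(k-1) v depends on the first letter only, and the vectors with this
   property are exactly those of psi_k(V_1). *)

Lemma big_pred_atmost1 (M : nmodType) (I : finType) (P : pred I) (F : I -> M) :
  (forall x y, P x -> P y -> x = y) ->
  \sum_(i | P i) F i = oapp F 0 [pick i | P i].
Proof.
move=> P_uniq; case: pickP => [x Px | P0] /=; last by rewrite big_pred0.
by rewrite (big_pred1 x) // => y; apply/idP/eqP => [Py | ->]; first exact: P_uniq.
Qed.

Lemma sum_indicator (S : pzSemiRingType) (I : finType) (P : pred I) (j : I) :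
  \sum_(i | P i) ((j == i)%:R : S) = (P j)%:R.
Proof.
have [Pj | nPj] := boolP (P j).
  rewrite (bigD1 j) //= eqxx big1 ?addr0 // => i /andP[_ /negbTE].
  by rewrite eq_sym => ->.
rewrite big1 // => i Pi; case: eqP => // ji.
by move: nPj; rewrite ji Pi.
Qed.

Section Words.

Variables (R : rcfType) (A : finType) (T : A -> A -> bool).

Definition wseq k (w : Word T k) : seq A := tval (sval w).

Lemma wseq_inj k : injective (@wseq k).
Proof. by move=> w1 w2 /val_inj /val_inj. Qed.

Lemma size_wseq k (w : Word T k) : size (wseq w) = k.
Proof. exact: size_tuple. Qed.

Lemma wseq_surj k (s : seq A) :
  size s = k -> admissible T s -> exists w : Word T k, wseq w = s.
Proof.
move=> /eqP size_s adm_s.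
by exists (exist _ (Tuple size_s) adm_s).
Qed.

(* Whether c may precede a word depends only on the word's first letter. *)
Lemma admissible_cons_take c n (s1 s2 : seq A) :
  take 1 s1 = take 1 s2 -> admissible T s2 ->
  admissible T (c :: take n s1) -> admissible T (c :: take n s2).
Proof.
case: n => [//|n]; case: s1 => [|a1 s1]; case: s2 => [|a2 s2] //= [<- _].
by rewrite /admissible /= => adm2 /andP[-> _]; rewrite take_path.
Qed.

Lemma coord_sum_basis k (I : finType) (F : I -> R[i])
    (P : I -> pred (Word T k)) (w : Word T k) :
  (\sum_i F i *: \sum_(w' | P i w') basisv R w') w = \sum_(i | P i w) F i.
Proof.
rewrite sum_ffunE [RHS]big_mkcond /=; apply: eq_bigr => i _.
rewrite ffunE sum_ffunE (eq_bigr (fun w' => (w == w')%:R)); last first.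
  by move=> w' _; rewrite ffunE.
by rewrite sum_indicator; case: (P i w); [exact: mulr1 | exact: mulr0].
Qed.

Lemma psiE k (u : V R T 1) (w : Word T k) :
  psi k u w = \sum_(a | take 1 (wseq w) == wseq a) u a.
Proof. exact: coord_sum_basis. Qed.

Lemma exists_rcons (b s : seq A) n :
  size b = n -> size s = n.+1 -> [exists x, s == rcons b x] = (b == take n s).
Proof.
case/lastP: s => [|p y] // size_b; rewrite size_rcons => -[size_p].
apply/existsP/eqP => [[x /eqP ->] | ->].
  by rewrite -cats1 (take_size_cat _ size_b).
by exists y; rewrite -cats1 (take_size_cat _ size_p) cats1.
Qed.

Lemma TkE k (v : V R T k.+1) (w : Word T k.+1) :
  Tk v w = \sum_c oapp v 0 [pick w' | wseq w' == c :: take k (wseq w)].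
Proof.
rewrite /Tk coord_sum_basis.
rewrite (eq_bigl (fun w' => behead (wseq w') == take k (wseq w))); last first.
  by move=> w'; apply: exists_rcons; rewrite ?size_behead size_wseq.
rewrite (partition_big (fun w' => head (thead (sval w)) (wseq w')) predT) //.
apply: eq_bigr => c _; rewrite -big_pred_atmost1; last first.
  by move=> w1 w2 /eqP e1 /eqP e2; apply: wseq_inj; rewrite e1 e2.
apply: eq_bigl => w'; have := size_wseq w'.
by case: (wseq w') => [|a s] //= _; rewrite eqseq_cons andbC.
Qed.

Definition prefix_determined k m (v : V R T k) :=
  forall w1 w2 : Word T k, take m (wseq w1) = take m (wseq w2) -> v w1 = v w2.

Lemma prefix_determined_size k (v : V R T k) : prefix_determined k v.
Proof.
by move=> w1 w2; rewrite !take_oversize ?size_wseq // => /wseq_inj ->.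
Qed.

Lemma exists_prepend k c (w1 w2 : Word T k.+1) :
  take 1 (wseq w1) = take 1 (wseq w2) ->
  (exists w : Word T k.+1, wseq w = c :: take k (wseq w1)) ->
  exists w : Word T k.+1, wseq w = c :: take k (wseq w2).
Proof.
move=> head_eq [w ew]; apply: wseq_surj; first by rewrite /= size_takel ?size_wseq.
apply: admissible_cons_take head_eq (svalP w2) _.
by rewrite -ew; apply: (svalP w).
Qed.

Lemma Tk_prefix_determined k m (v : V R T k) : (0 < m < k)%N ->
  prefix_determined m.+1 v -> prefix_determined m (Tk v).
Proof.
case: k v => [|k] v /andP[m_gt0 m_lt] // det_v w1 w2 prefix_eq.
have head_eq : take 1 (wseq w1) = take 1 (wseq w2).
  by rewrite -[in LHS](take_takel _ m_gt0) prefix_eq take_takel.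
rewrite !TkE; apply: eq_bigr => c _.
case: pickP => [a /eqP ea | no_a]; case: pickP => [b /eqP eb | no_b] //=.
- by apply: det_v; rewrite ea eb /= !take_takel // prefix_eq.
- have [b eb] := exists_prepend head_eq (ex_intro _ a ea).
  by move: (no_b b); rewrite eb eqxx.
- have [a ea] := exists_prepend (esym head_eq) (ex_intro _ b eb).
  by move: (no_a a); rewrite ea eqxx.
Qed.

Lemma iter_Tk_prefix_determined k i (v : V R T k) : (i < k)%N ->
  prefix_determined (k - i) (iter i (@Tk R A T k) v).
Proof.
elim: i => [|i IH] i_lt; first by rewrite subn0; apply: prefix_determined_size.
rewrite iterS; apply: Tk_prefix_determined; first by apply/andP; split; lia.
by rewrite subnSK; [apply/IH/ltnW | apply: ltnW].
Qed.

Lemma prefix_determined1_psi k (v : V R T k) : (0 < k)%N ->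
  prefix_determined 1 v -> exists u, v = psi k u.
Proof.
move=> k_gt0 det_v.
exists [ffun a => oapp v 0 [pick w | take 1 (wseq w) == wseq a]].
apply/ffunP => w; rewrite psiE big_pred_atmost1; last first.
  by move=> a1 a2 /eqP e1 /eqP e2; apply: wseq_inj; rewrite -e1 -e2.
case: pickP => [a /eqP ea | no_a] /=.
  rewrite ffunE; case: pickP => [w' /eqP ew' | no_w] /=.
    by apply: det_v; rewrite ea ew'.
  by move: (no_w w); rewrite ea eqxx.
have [a ea] : exists a : Word T 1, wseq a = take 1 (wseq w).
  apply: wseq_surj; first by rewrite size_takel // size_wseq.
  exact/take_sorted/(svalP w).
by move: (no_a a); rewrite ea eqxx.
Qed.

End Words.

Theorem lemma1p2 (R : rcfType) (A : finType) (T : A -> A -> bool) (k : nat) :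
  (1 <= k)%N ->
  exists n : nat, forall v : V R T k,
    exists u : V R T 1, iter n (@Tk R A T k) v = psi k u.
Proof.
move=> k_gt0; exists k.-1 => v; apply: prefix_determined1_psi => //.
have -> : 1%N = (k - k.-1)%N by lia.
by apply: iter_Tk_prefix_determined; lia.
Qed.
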